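(* For $a\in\mathbb{R}$, let $\mathfrak{g}_{a,1}$ be the $8$-dimensional real Lie algebra with a basis $\{e^1,\dots,e^8\}$ of its dual $\mathfrak{g}_{a,1}^*$ satisfying $$de^1=de^2=de^3=0,\quad de^4=e^{13},\quad de^5=e^{23},\quad de^6=3e^{14}+e^{25}-2e^{35},$$ $$de^7=2a\,e^{12}+e^{15}+e^{24}+2e^{34},\quad de^8=-2e^{14}+e^{16}-2e^{25}+e^{27}-2e^{45}.$$ Then the Lie algebras $\mathfrak{g}_{a,1}$, $a\in[0,\infty)$, are nilpotent, pairwise non-isomorphic, and each of them admits a complex structure.
   Context: Here $e^{ij}=e^i\wedge e^j$, and $d$ is the Chevalley–Eilenberg differential on $\bigwedge\mathfrak{g}^*$, determined by $d\alpha(X,Y)=-\alpha([X,Y])$ for $\alpha\in\mathfrak{g}^*$; the equations above define the Lie bracket. A complex structure on a real Lie algebra $\mathfrak{g}$ is an endomorphism $J:\mathfrak{g}\to\mathfrak{g}$ with $J^2=-\mathrm{Id}$ and vanishing Nijenhuis tensor $N_J(X,Y)=[X,Y]+J[JX,Y]+J[X,JY]-[JX,JY]=0$ for all $X,Y\in\mathfrak{g}$. *)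

From HB Require Import structures.
From mathcomp Require Import all_boot all_order all_algebra.
From mathcomp Require Import reals.
Set Implicit Arguments. Unset Strict Implicit. Unset Printing Implicit Defensive.
Import Order.TTheory GRing.Theory Num.Theory.
Local Open Scope ring_scope.

Section G.
Variable R : realType.

(* Vectors of g are row vectors x in R^8, written in the basis e_1..e_8
   dual to e^1..e^8.  coord x i = e^i(x), 1-based as in the paper. *)
Definition coord (x : 'rV[R]_8) (i : nat) : R := x ord0 (inord i.-1).

Definition e2 (x y : 'rV[R]_8) (i j : nat) : R :=
  coord x i * coord y j - coord x j * coord y i.

Definition dform (a : R) (k : nat) (x y : 'rV[R]_8) : R :=
  match k with
  | 4 => e2 x y 1 3
  | 5 => e2 x y 2 3
  | 6 => 3 * e2 x y 1 4 + e2 x y 2 5 - 2 * e2 x y 3 5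
  | 7 => 2 * a * e2 x y 1 2 + e2 x y 1 5 + e2 x y 2 4 + 2 * e2 x y 3 4
  | 8 => - 2 * e2 x y 1 4 + e2 x y 1 6 - 2 * e2 x y 2 5 + e2 x y 2 7
         - 2 * e2 x y 4 5
  | _ => 0
  end.

(* The bracket determined by d alpha(X,Y) = - alpha([X,Y]):
   e^k([x,y]) = - de^k(x,y). *)
Definition gbr (a : R) (x y : 'rV[R]_8) : 'rV[R]_8 :=
  \row_(k < 8) - dform a k.+1 x y.

Fixpoint itbr (br : 'rV[R]_8 -> 'rV[R]_8 -> 'rV[R]_8)
    (xs : seq 'rV[R]_8) (y : 'rV[R]_8) : 'rV[R]_8 :=
  match xs with
  | [::] => y
  | x :: xs' => br x (itbr br xs' y)
  end.

(* Nilpotent: the lower central series vanishes at some step, i.e. all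
   brackets of some fixed length n+1 vanish (g^{(n)} is spanned by them). *)
Definition lie_nilpotent (br : 'rV[R]_8 -> 'rV[R]_8 -> 'rV[R]_8) : Prop :=
  exists n : nat, forall (xs : seq 'rV[R]_8) (y : 'rV[R]_8),
    size xs = n -> itbr br xs y = 0.

Definition lie_isomorphic (br1 br2 : 'rV[R]_8 -> 'rV[R]_8 -> 'rV[R]_8) : Prop :=
  exists A : 'M[R]_8, A \in unitmx /\
    forall x y, br1 x y *m A = br2 (x *m A) (y *m A).

(* Complex structure: J (acting by x |-> x *m J) with J^2 = -Id and
   vanishing Nijenhuis tensor. *)
Definition complex_structure (br : 'rV[R]_8 -> 'rV[R]_8 -> 'rV[R]_8)
    (J : 'M[R]_8) : Prop :=
  J *m J = - 1%:M /\
  forall x y, br x y + br (x *m J) y *m J + br x (y *m J) *m J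
              - br (x *m J) (y *m J) = 0.

End G.

From Pilot Require Import Defs.
From HB Require Import structures.
From mathcomp Require Import all_boot all_order all_algebra.
From mathcomp Require Import reals.
From mathcomp Require Import ring lra.
Set Implicit Arguments. Unset Strict Implicit. Unset Printing Implicit Defensive.
Import Order.TTheory GRing.Theory Num.Theory.
Local Open Scope ring_scope.

(* The lower central series of g_{a,1} is g > <e4..e8> > <e6,e7,e8> > <e8> > 0,
   as can be read off the structure equations; this gives nilpotency.  An
   isomorphism A : g_{a,1} -> g_{b,1} preserves this filtration, so its matrix
   (m_ij) is block triangular, and invertibility gives
   m88 = m33^2 (m11 m22 - m12 m21) <> 0.  Comparing both sides of
   A[e_i,e_j]_a = [Ae_i,Ae_j]_b coordinatewise then forces, modulo the derived
   algebra, Ae1 = e1, Ae2 = s e2, Ae3 = s e3 with s = +-1 and b = s a; hence a = b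
   when both are nonnegative.  The complex structure is J e1 = e2, J e4 = e5,
   J e6 = e7, J e3 = e8, for which the Nijenhuis tensor vanishes identically. *)

(* Without it, mathcomp's [vector.coord] would shadow [Defs.coord]. *)
Local Notation coord := Defs.coord.
Arguments Defs.coord : simpl never.

Lemma homog2_eq0 (F : idomainType) (p q r s x y : F) :
  p * s - q * r != 0 -> p * x + q * y = 0 -> r * x + s * y = 0 -> x = 0 /\ y = 0.
Proof.
move=> det_neq0 eq1 eq2.
have detx : (p * s - q * r) * x = 0.
  by transitivity (s * (p * x + q * y) - q * (r * x + s * y)); [ring | rewrite eq1 eq2; ring].
have dety : (p * s - q * r) * y = 0.
  by transitivity (p * (r * x + s * y) - r * (p * x + q * y)); [ring | rewrite eq1 eq2; ring].
by move/eqP: dety; move/eqP: detx; rewrite !mulf_eq0 (negbTE det_neq0) => /eqP-> /eqP->.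
Qed.

Section Ga1.
Variable R : realType.
Implicit Types (x y : 'rV[R]_8) (M : 'M[R]_8).

(* Indices are 1-based as in [Defs.coord]; the junk index 0 aliases index 1. *)
Definition ent M (i j : nat) : R := M (inord i.-1) (inord j.-1).
Arguments ent : simpl never.

Definition evec (i : nat) : 'rV[R]_8 := delta_mx 0 (inord i.-1).

Lemma coordP x y :
  (forall k, (0 < k <= 8)%N -> coord x k = coord y k) -> x = y.
Proof.
move=> eq_xy; apply/rowP => j; have := eq_xy j.+1.
by rewrite /Defs.coord /= inord_val [ord0]ord1 => ->.
Qed.

Lemma coordD x y k : coord (x + y) k = coord x k + coord y k.
Proof. by rewrite /Defs.coord mxE. Qed.

Lemma coord0 k : coord (0 : 'rV[R]_8) k = 0.
Proof. by rewrite /Defs.coord mxE. Qed.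

Lemma coordN x k : coord (- x) k = - coord x k.
Proof. by rewrite /Defs.coord mxE. Qed.

Lemma coordZ c x k : coord (c *: x) k = c * coord x k.
Proof. by rewrite /Defs.coord mxE. Qed.

Lemma coord_evec i k : (0 < i <= 8)%N -> (0 < k <= 8)%N ->
  coord (evec i) k = if i == k then 1 else 0.
Proof.
case: i => // i /andP[_ i8]; case: k => // k /andP[_ k8].
by rewrite /Defs.coord mxE eqxx -val_eqE /= !inordK // eqSS eq_sym; case: eqP.
Qed.

Lemma coord_evec_mul i M k : coord (evec i *m M) k = ent M i k.
Proof. by rewrite /evec -rowE /Defs.coord mxE. Qed.

Lemma coord_mulmx x M k : coord (x *m M) k =
  coord x 1 * ent M 1 k + coord x 2 * ent M 2 k + coord x 3 * ent M 3 k +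
  coord x 4 * ent M 4 k + coord x 5 * ent M 5 k + coord x 6 * ent M 6 k +
  coord x 7 * ent M 7 k + coord x 8 * ent M 8 k.
Proof.
rewrite /ent /Defs.coord mxE !big_ord_recl big_ord0 addr0 !addrA.
by congr (_ + _ + _ + _ + _ + _ + _ + _); congr (_ * _);
  do ?[congr (fun_of_matrix _ _ _)]; apply: val_inj; rewrite /= inordK.
Qed.

Lemma coord_gbr (a : R) x y k : (0 < k <= 8)%N -> coord (gbr a x y) k = - dform a k x y.
Proof.
case: k => // k /andP[_ k8].
by rewrite /Defs.coord mxE inordK.
Qed.


(* The n-th term g^n of the lower central series is spanned by the e_k with
   k > lcs_bound n, and e_k lies in g^(lcs_weight k) but not in the next term. *)
Definition lcs_bound (n : nat) : nat :=
  match n with 0 => 0 | 1 => 3 | 2 => 5 | 3 => 7 | _ => 8 end.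

Definition lcs_mem (n : nat) x : Prop :=
  forall k, (0 < k <= lcs_bound n)%N -> coord x k = 0.

Lemma lcs_memZ n c x : lcs_mem n x -> lcs_mem n (c *: x).
Proof. by move=> x_n k k_n; rewrite coordZ x_n ?mulr0. Qed.

Lemma lcs_mem0 x : lcs_mem 0 x.
Proof. by case. Qed.

Lemma gbr_lcs (a : R) n x y : lcs_mem n y -> lcs_mem n.+1 (gbr a x y).
Proof.
move=> y_n k /andP[k_gt0 k_le]; rewrite coord_gbr; last first.
  by rewrite k_gt0 (leq_trans k_le) //; case: n {y_n k_le} => [|[|[|[|n]]]].
case: n y_n k_le => [|[|[|[|n]]]] y_n /= k_le;
  case: k k_gt0 k_le => [|[|[|[|[|[|[|[|[|k]]]]]]]]] //= _ _; rewrite /e2;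
  rewrite ?(y_n 1) ?(y_n 2) ?(y_n 3) ?(y_n 4) ?(y_n 5) ?(y_n 6) ?(y_n 7) //; ring.
Qed.

Lemma lcs_mem4_eq0 x : lcs_mem 4 x -> x = 0.
Proof. by move=> x4; apply: coordP => k k_range; rewrite x4 // coord0. Qed.

Lemma itbr_lcs (a : R) xs y : lcs_mem (size xs) (itbr (gbr a) xs y).
Proof. by elim: xs => [|x xs IH] /=; [exact: lcs_mem0 | exact: gbr_lcs]. Qed.

Lemma gbr_nilpotent (a : R) : lie_nilpotent (gbr a).
Proof.
by exists 4%N => xs y size_xs; apply: lcs_mem4_eq0; rewrite -size_xs; apply: itbr_lcs.
Qed.

Section BasisBrackets.
Variable a : R.

Ltac basis_bracket :=
  apply: coordP => -[|[|[|[|[|[|[|[|[|k]]]]]]]]] //= _;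
  rewrite ?coordN ?coordZ coord_gbr // /dform /e2 !coord_evec //=; by field.

Lemma evec4_gbr : evec 4 = - gbr a (evec 1) (evec 3). Proof. basis_bracket. Qed.
Lemma evec5_gbr : evec 5 = - gbr a (evec 2) (evec 3). Proof. basis_bracket. Qed.
Lemma evec6_gbr : evec 6 = 2^-1 *: gbr a (evec 3) (evec 5). Proof. basis_bracket. Qed.
Lemma evec7_gbr : evec 7 = - gbr a (evec 1) (evec 5). Proof. basis_bracket. Qed.
Lemma evec8_gbr : evec 8 = - gbr a (evec 1) (evec 6). Proof. basis_bracket. Qed.
End BasisBrackets.

Definition lcs_weight (k : nat) : nat :=
  match k with 0 | 1 | 2 | 3 => 0 | 4 | 5 => 1 | 6 | 7 => 2 | _ => 3 end.

Section Isomorphism.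
Variables (a b : R) (A : 'M[R]_8).
Hypothesis isoA : forall x y, gbr a x y *m A = gbr b (x *m A) (y *m A).
Hypothesis unitA : A \in unitmx.

Lemma iso_lcs_step n k p q c :
  evec k = c *: gbr a (evec p) (evec q) -> lcs_mem n (evec q *m A) ->
  lcs_mem n.+1 (evec k *m A).
Proof. by move=> -> q_n; rewrite -scalemxAl isoA; apply/lcs_memZ/gbr_lcs. Qed.

Lemma iso_lcs k : (k <= 8)%N -> lcs_mem (lcs_weight k) (evec k *m A).
Proof.
have opp_scale x : - x = -1 *: x by rewrite scaleN1r.
have e4 := iso_lcs_step (etrans (evec4_gbr a) (opp_scale _)) (lcs_mem0 _).
have e5 := iso_lcs_step (etrans (evec5_gbr a) (opp_scale _)) (lcs_mem0 _).
have e6 := iso_lcs_step (evec6_gbr a) e5.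
have e7 := iso_lcs_step (etrans (evec7_gbr a) (opp_scale _)) e5.
have e8 := iso_lcs_step (etrans (evec8_gbr a) (opp_scale _)) e6.
by case: k => [|[|[|[|[|[|[|[|[|k]]]]]]]]] // _; exact: lcs_mem0.
Qed.

Lemma coord_iso_evec i l : (i <= 8)%N -> (0 < l)%N ->
  coord (evec i *m A) l = if (l <= lcs_bound (lcs_weight i))%N then 0 else ent A i l.
Proof.
move=> i_le8 l_gt0; case: ifP => [l_le | _]; last exact: coord_evec_mul.
by apply: iso_lcs; rewrite ?l_gt0.
Qed.

(* Row convention: [m i j] is the e_j-coordinate of the image of e_i. *)
Local Notation m i j := (ent A i j).

Lemma iso_bracket_coord i j k :
  coord (gbr a (evec i) (evec j) *m A) k = coord (gbr b (evec i *m A) (evec j *m A)) k.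
Proof. by rewrite isoA. Qed.

(* Turns the e_k-coordinate of A[e_i,e_j]_a = [Ae_i,Ae_j]_b into a polynomial
   identity between entries of A, the entries killed by [iso_lcs] set to 0. *)
Ltac expand_coords :=
  rewrite coord_mulmx -!coord_evec_mul !coord_gbr // /dform /e2 !coord_evec // !coord_iso_evec //=.

Lemma iso_m88_neq0 : m 8 8 != 0.
Proof.
have e8A : evec 8 *m A = m 8 8 *: evec 8.
  apply: coordP => -[|[|[|[|[|[|[|[|[|k]]]]]]]]] //= _;
  by rewrite coordZ coord_iso_evec ?coord_evec //= ?mulr0 ?mulr1.
apply/eqP => m88_0.
have := congr1 (fun x : 'rV[R]_8 => coord (x *m invmx A) 8) e8A.
by rewrite mulmxK // m88_0 scale0r mul0mx coord0 coord_evec //; apply/eqP; rewrite oner_eq0.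
Qed.

Lemma iso_m88 : m 8 8 = m 3 3 ^+ 2 * (m 1 1 * m 2 2 - m 1 2 * m 2 1).
Proof.
have e124 : m 1 1 * m 2 3 - m 1 3 * m 2 1 = 0.
  by move: (iso_bracket_coord 1 2 4); expand_coords; lra.
have e125 : m 1 2 * m 2 3 - m 1 3 * m 2 2 = 0.
  by move: (iso_bracket_coord 1 2 5); expand_coords; lra.
have -> : m 8 8 = m 4 4 * m 5 5 - m 4 5 * m 5 4.
  by move: (iso_bracket_coord 4 5 8); expand_coords; lra.
have -> : m 4 4 = m 1 1 * m 3 3 - m 1 3 * m 3 1.
  by move: (iso_bracket_coord 1 3 4); expand_coords; lra.
have -> : m 4 5 = m 1 2 * m 3 3 - m 1 3 * m 3 2.
  by move: (iso_bracket_coord 1 3 5); expand_coords; lra.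
have -> : m 5 4 = m 2 1 * m 3 3 - m 2 3 * m 3 1.
  by move: (iso_bracket_coord 2 3 4); expand_coords; lra.
have -> : m 5 5 = m 2 2 * m 3 3 - m 2 3 * m 3 2.
  by move: (iso_bracket_coord 2 3 5); expand_coords; lra.
transitivity (m 3 3 ^+ 2 * (m 1 1 * m 2 2 - m 1 2 * m 2 1)
  - m 3 3 * m 3 2 * (m 1 1 * m 2 3 - m 1 3 * m 2 1)
  + m 3 3 * m 3 1 * (m 1 2 * m 2 3 - m 1 3 * m 2 2)); first by ring.
by rewrite e124 e125; ring.
Qed.

Lemma iso_m33_neq0 : m 3 3 != 0.
Proof. by move: iso_m88_neq0; rewrite iso_m88 mulf_eq0 negb_or sqrf_eq0 => /andP[]. Qed.

Lemma iso_det12_neq0 : m 1 1 * m 2 2 - m 1 2 * m 2 1 != 0.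
Proof. by move: iso_m88_neq0; rewrite iso_m88 mulf_eq0 negb_or => /andP[]. Qed.

Lemma iso_m13_m23 : m 1 3 = 0 /\ m 2 3 = 0.
Proof.
apply: (homog2_eq0 (p := m 2 1) (q := - m 1 1) (r := m 2 2) (s := - m 1 2)).
- by apply: contra_neq iso_det12_neq0 => det0; rewrite -det0; ring.
- by move: (iso_bracket_coord 1 2 4); expand_coords; lra.
- by move: (iso_bracket_coord 1 2 5); expand_coords; lra.
Qed.

Lemma iso_block45 : [/\ m 4 4 = m 1 1 * m 3 3, m 4 5 = m 1 2 * m 3 3,
  m 5 4 = m 2 1 * m 3 3 & m 5 5 = m 2 2 * m 3 3].
Proof.
have [m13_0 m23_0] := iso_m13_m23.
split.
- by move: (iso_bracket_coord 1 3 4); expand_coords; rewrite m13_0; lra.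
- by move: (iso_bracket_coord 1 3 5); expand_coords; rewrite m13_0; lra.
- by move: (iso_bracket_coord 2 3 4); expand_coords; rewrite m23_0; lra.
- by move: (iso_bracket_coord 2 3 5); expand_coords; rewrite m23_0; lra.
Qed.

Lemma iso_det67_neq0 : m 6 6 * m 7 7 - m 6 7 * m 7 6 != 0.
Proof.
have e168 : m 8 8 = m 1 1 * m 6 6 + m 1 2 * m 6 7.
  by move: (iso_bracket_coord 1 6 8); expand_coords; lra.
have e278 : m 8 8 = m 2 1 * m 7 6 + m 2 2 * m 7 7.
  by move: (iso_bracket_coord 2 7 8); expand_coords; lra.
have e178 : m 1 1 * m 7 6 + m 1 2 * m 7 7 = 0.
  by move: (iso_bracket_coord 1 7 8); expand_coords; lra.
have e268 : m 2 1 * m 6 6 + m 2 2 * m 6 7 = 0.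
  by move: (iso_bracket_coord 2 6 8); expand_coords; lra.
have det_mul : (m 1 1 * m 2 2 - m 1 2 * m 2 1) * (m 6 6 * m 7 7 - m 6 7 * m 7 6) = m 8 8 ^+ 2.
  transitivity ((m 1 1 * m 6 6 + m 1 2 * m 6 7) * (m 2 1 * m 7 6 + m 2 2 * m 7 7)
    - (m 1 1 * m 7 6 + m 1 2 * m 7 7) * (m 2 1 * m 6 6 + m 2 2 * m 6 7)); first by ring.
  by rewrite -e168 -e278 e178 e268; ring.
apply/eqP => det0; move: det_mul; rewrite det0 mulr0 => /esym/eqP.
by rewrite sqrf_eq0 (negbTE iso_m88_neq0).
Qed.

Lemma iso_m31_m32 : m 3 1 = 0 /\ m 3 2 = 0.
Proof.
apply: (homog2_eq0 iso_det67_neq0).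
- by move: (iso_bracket_coord 3 6 8); expand_coords; lra.
- by move: (iso_bracket_coord 3 7 8); expand_coords; lra.
Qed.

Lemma iso_block67 : [/\ m 6 6 = m 3 3 * m 5 5, m 6 7 = - (m 3 3 * m 5 4),
  m 7 6 = - (m 3 3 * m 4 5) & m 7 7 = m 3 3 * m 4 4].
Proof.
have [m31_0 m32_0] := iso_m31_m32.
split.
- by move: (iso_bracket_coord 3 5 6); expand_coords; rewrite m31_0 m32_0; lra.
- by move: (iso_bracket_coord 3 5 7); expand_coords; rewrite m31_0 m32_0; lra.
- by move: (iso_bracket_coord 3 4 6); expand_coords; rewrite m31_0 m32_0; lra.
- by move: (iso_bracket_coord 3 4 7); expand_coords; rewrite m31_0 m32_0; lra.
Qed.

Lemma iso_m21_m22 : m 2 1 = 0 /\ m 2 2 = m 3 3.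
Proof.
have [_ m23_0] := iso_m13_m23.
have [_ _ m54E m55E] := iso_block45.
have [m66E m67E _ _] := iso_block67.
have e256 : m 3 3 * (m 3 3 * m 2 2 - 3 * m 2 1 ^+ 2 - m 2 2 ^+ 2) = 0.
  by move: (iso_bracket_coord 2 5 6); expand_coords; rewrite m66E m54E m55E m23_0; lra.
have e257 : m 3 3 * (m 2 1 * (m 3 3 + 2 * m 2 2)) = 0.
  by move: (iso_bracket_coord 2 5 7); expand_coords; rewrite m67E m54E m55E m23_0; lra.
move/eqP: e256; move/eqP: e257; rewrite !mulf_eq0 (negbTE iso_m33_neq0) /= => e257 /eqP e256.
have m21_0 : m 2 1 = 0.
  case/orP: e257 => /eqP // m33E.
  by move: e256; rewrite (_ : m 3 3 = -2 * m 2 2); [nra | lra].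
have m22_neq0 : m 2 2 != 0.
  by apply: contra_neq iso_det12_neq0 => ->; rewrite m21_0; ring.
split=> //; apply/eqP; rewrite eq_sym -subr_eq0.
have : m 2 2 * (m 3 3 - m 2 2) = 0 by rewrite m21_0 in e256; lra.
by move/eqP; rewrite mulf_eq0 (negbTE m22_neq0).
Qed.

Lemma iso_m12_m33_sq : m 1 2 = 0 /\ m 3 3 ^+ 2 = m 1 1 ^+ 2.
Proof.
have [m13_0 _] := iso_m13_m23.
have [m44E m45E m54E m55E] := iso_block45.
have [m66E m67E _ _] := iso_block67.
have [m21_0 m22E] := iso_m21_m22.
have m11_neq0 : m 1 1 != 0.
  by apply: contra_neq iso_det12_neq0 => ->; rewrite m21_0; ring.
have m12_0 : m 1 2 = 0.
  have : m 1 1 * m 3 3 * m 1 2 = 0.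
    by move: (iso_bracket_coord 1 4 7); expand_coords;
      rewrite m67E m54E m21_0 m44E m45E m13_0; lra.
  by move/eqP; rewrite !mulf_eq0 (negbTE m11_neq0) (negbTE iso_m33_neq0) => /eqP.
split=> //; apply/eqP; rewrite -subr_eq0.
have : m 3 3 * (m 3 3 ^+ 2 - m 1 1 ^+ 2) = 0.
  by move: (iso_bracket_coord 1 4 6); expand_coords;
    rewrite m66E m55E m22E m44E m45E m12_0; lra.
by move/eqP; rewrite mulf_eq0 (negbTE iso_m33_neq0).
Qed.

Lemma iso_m11_m24 : m 1 1 = 1 /\ m 2 4 = 0.
Proof.
have [m13_0 m23_0] := iso_m13_m23.
have [m31_0 m32_0] := iso_m31_m32.
have [m44E m45E m54E m55E] := iso_block45.
have [_ _ m76E _] := iso_block67.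
have [m21_0 m22E] := iso_m21_m22.
have [m12_0 m33_sq] := iso_m12_m33_sq.
have m88E : m 8 8 = m 1 1 * m 3 3 ^+ 3 by rewrite iso_m88 m12_0 m22E; ring.
have m15E : m 3 3 * m 1 5 = 3 * m 1 1 * m 2 4.
  by move: (iso_bracket_coord 1 2 6); expand_coords;
    rewrite m76E m45E m12_0 m21_0 m22E m13_0 m23_0; lra.
have m46E : m 4 6 = 3 * m 1 1 * m 3 4 + 2 * m 1 5 * m 3 3.
  by move: (iso_bracket_coord 1 3 6); expand_coords; rewrite m12_0 m13_0 m31_0 m32_0; lra.
have m68E : m 6 8 = m 3 4 * m 3 3 ^+ 2.
  by move: (iso_bracket_coord 3 5 8); expand_coords;
    rewrite m31_0 m32_0 m54E m55E m21_0 m22E; lra.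
have m57E : m 5 7 = m 3 3 * m 3 4 - 2 * m 2 4 * m 3 3.
  by move: (iso_bracket_coord 2 3 7); expand_coords;
    rewrite m21_0 m22E m23_0 m31_0 m32_0; lra.
have e258 : m 3 3 ^+ 2 * (m 3 3 + 2 * m 2 4 - m 1 1 * m 3 3) = 0.
  by move: (iso_bracket_coord 2 5 8); expand_coords;
    rewrite m68E m88E m57E m54E m55E m21_0 m22E; lra.
have e148 : m 3 3 ^+ 2 * (m 3 3 - 6 * m 2 4 - m 1 1 * m 3 3) = 0.
  (* lra treats monomials as atoms: supply the multiples of m33_sq and m15E. *)
  have sq_mul t : m 3 3 ^+ 2 * t = m 1 1 ^+ 2 * t by rewrite m33_sq.
  have := sq_mul (m 3 4); have := sq_mul (m 2 4); have := sq_mul (m 3 3).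
  have := congr1 ( *%R (m 1 1)) m15E.
  by move: (iso_bracket_coord 1 4 8); expand_coords;
    rewrite m68E m88E m46E m44E m45E m12_0; lra.
have cancel_sq t : m 3 3 ^+ 2 * t = 0 -> t = 0.
  by move/eqP; rewrite mulf_eq0 sqrf_eq0 (negbTE iso_m33_neq0) => /eqP.
move/cancel_sq: e258 => e258; move/cancel_sq: e148 => e148.
have m11_1 : m 3 3 * (1 - m 1 1) = 0 by lra.
move/eqP: m11_1; rewrite mulf_eq0 (negbTE iso_m33_neq0) subr_eq0 => /eqP m11_1.
by split; [| rewrite -m11_1 in e258; lra].
Qed.

Lemma iso_param : a * m 3 3 = b.
Proof.
have [m13_0 m23_0] := iso_m13_m23.
have [m31_0 m32_0] := iso_m31_m32.
have [m44E m45E _ _] := iso_block45.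
have [_ _ _ m77E] := iso_block67.
have [m21_0 m22E] := iso_m21_m22.
have [m12_0 _] := iso_m12_m33_sq.
have [m11_1 m24_0] := iso_m11_m24.
have m47E : m 4 7 = m 3 5 - 2 * m 3 3 * m 1 4.
  by move: (iso_bracket_coord 1 3 7); expand_coords; rewrite m13_0 m31_0 m32_0 m12_0 m11_1; lra.
have m78E : m 7 8 = m 3 3 * m 3 5.
  by move: (iso_bracket_coord 3 4 8); expand_coords;
    rewrite m31_0 m32_0 m44E m45E m12_0 m11_1; lra.
have m25E : m 2 5 = m 3 3 * m 1 4.
  have : m 3 3 * (m 2 5 - m 3 3 * m 1 4) = 0.
    by move: (iso_bracket_coord 2 4 8); expand_coords;
      rewrite m21_0 m45E m12_0 m44E m11_1 m47E m78E m22E m24_0; lra.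
  by move/eqP; rewrite mulf_eq0 (negbTE iso_m33_neq0) subr_eq0 => /eqP.
have : m 3 3 * (a * m 3 3 - b) = 0.
  by move: (iso_bracket_coord 1 2 7); expand_coords;
    rewrite m77E m44E m11_1 m22E m12_0 m21_0 m25E m13_0 m23_0; lra.
by move/eqP; rewrite mulf_eq0 (negbTE iso_m33_neq0) subr_eq0 => /eqP.
Qed.

Lemma iso_param_eq : 0 <= a -> 0 <= b -> a = b.
Proof.
move=> a_ge0 b_ge0; have [_ m33_sq] := iso_m12_m33_sq.
have [m11_1 _] := iso_m11_m24.
move: m33_sq; rewrite m11_1 expr1n => /eqP; rewrite sqrf_eq1 => /orP[] /eqP m33E;
  have := iso_param; rewrite m33E; lra.
Qed.

End Isomorphism.

Definition cplxJ_entry (i j : nat) : R :=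
  match i, j with
  | 1, 2 | 4, 5 | 6, 7 | 3, 8 => 1
  | 2, 1 | 5, 4 | 7, 6 | 8, 3 => -1
  | _, _ => 0
  end.

Definition cplxJ : 'M[R]_8 := \matrix_(i, j) cplxJ_entry i.+1 j.+1.

Lemma ent_cplxJ i j : (0 < i <= 8)%N -> (0 < j <= 8)%N -> ent cplxJ i j = cplxJ_entry i j.
Proof. by case: i => // i /andP[_ i8]; case: j => // j /andP[_ j8]; rewrite /ent mxE !inordK. Qed.

Lemma cplxJ_sqr : cplxJ *m cplxJ = - 1%:M.
Proof.
have J2x x : x *m cplxJ *m cplxJ = - x.
  apply: coordP => -[|[|[|[|[|[|[|[|[|k]]]]]]]]] //= _;
  by rewrite coordN !coord_mulmx !ent_cplxJ //=; ring.
by apply/row_matrixP => i; rewrite !rowE mulmxA J2x mulmxN mulmx1.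
Qed.

Lemma cplxJ_complex_structure (a : R) : complex_structure (gbr a) cplxJ.
Proof.
split=> [|x y]; first exact: cplxJ_sqr.
apply: coordP => -[|[|[|[|[|[|[|[|[|k]]]]]]]]] //= _;
by rewrite coord0 !coordD !coordN !coord_mulmx !coord_gbr // !ent_cplxJ //= /e2 !coord_mulmx !ent_cplxJ //=; ring.
Qed.

End Ga1.

Theorem theorem3p2 (R : realType) :
  (forall a : R, 0 <= a -> lie_nilpotent (gbr a)) /\
  (forall a b : R, 0 <= a -> 0 <= b ->
     lie_isomorphic (gbr a) (gbr b) -> a = b) /\
  (forall a : R, 0 <= a -> exists J : 'M[R]_8, complex_structure (gbr a) J).
Proof.
split; [|split].
- by move=> a _; apply: gbr_nilpotent.
- by move=> a b a_ge0 b_ge0 [A [unitA isoA]]; apply: iso_param_eq isoA unitA a_ge0 b_ge0.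
- by move=> a _; exists (cplxJ R); apply: cplxJ_complex_structure.
Qed.
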